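(* Fix $a\in(0,\tfrac12)$. Suppose that for some $E\in(0,1]$ and some $\lambda\le\lambda_0:=-1+a$ the $\Theta$-flow described in the context has a saddles connector from $(0,0)$ to $(\pi,-\pi)$. Then for every $E'\in[0,E)$ the $\Theta$-flow with parameters $(E',\lambda)$ has a corridor $\mathcal K_1(E',\lambda)$ of winding number $0$.
   Context: For $a\in(0,\tfrac12)$, $E\in[0,1]$, $\lambda\in\mathbb R$, the $\Theta$-flow is the system on the strip $[0,\pi]\times\mathbb R$ (with $\Theta$ understood mod $2\pi$ on the cylinder) $$\dot\theta=\sin\theta,\qquad \dot\Theta=-2a\sin\theta\cos\theta\cos\Theta+2aE\sin^2\theta\sin\Theta-\sin\Theta+2\lambda\sin\theta.$$ Its equilibria are $(0,0)$, $(0,\pi)$ (left) and $(\pi,-\pi)$, $(\pi,0)$ (right), mod $2\pi$ in $\Theta$. Let $\widetilde{\mathcal W}^-$ be the unique orbit in $(0,\pi)\times\mathbb R$ with $\alpha$-limit $(0,0)$ and $\widetilde{\mathcal W}^+$ the unique orbit with $\omega$-limit $(\pi,-\pi)$. A saddles connector from $(0,0)$ to $(\pi,-\pi)$ is an orbit in the strip with $\alpha$-limit $(0,0)$ and $\omega$-limit $(\pi,-\pi)$ (i.e. $\widetilde{\mathcal W}^-=\widetilde{\mathcal W}^+$). The flow has a corridor $\mathcal K_1(E,\lambda)$ of winding number $k\in\mathbb Z$ if $\widetilde{\mathcal W}^-\neq\widetilde{\mathcal W}^+$ and the $\omega$-limit of $\widetilde{\mathcal W}^-$ is $(\pi,-2\pi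 k)$. *)

From Stdlib Require Import Reals.
From Coquelicot Require Import Coquelicot.
Open Scope R_scope.

Definition theta_rhs (a E lam th Th : R) : R :=
  - 2 * a * sin th * cos th * cos Th + 2 * a * E * (sin th) ^ 2 * sin Th
  - sin Th + 2 * lam * sin th.

(* A (global-in-time) solution of the Theta-flow lying in the open strip
   (0,pi) x R, with Theta lifted to R. *)
Definition strip_solution (a E lam : R) (th Th : R -> R) : Prop :=
  forall t : R,
    0 < th t < PI /\
    is_derive th t (sin (th t)) /\
    is_derive Th t (theta_rhs a E lam (th t) (Th t)).

Definition alpha_limit (th Th : R -> R) (p q : R) : Prop :=
  filterlim th (Rbar_locally m_infty) (locally p) /\
  filterlim Th (Rbar_locally m_infty) (locally q).

Definition omega_limit (th Th : R -> R) (p q : R) : Prop :=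
  filterlim th (Rbar_locally p_infty) (locally p) /\
  filterlim Th (Rbar_locally p_infty) (locally q).

Definition saddles_connector (a E lam : R) : Prop :=
  exists th Th, strip_solution a E lam th Th /\
    alpha_limit th Th 0 0 /\ omega_limit th Th PI (- PI).

(* Corridor K_1(E,lam) of winding number k: the orbit W^- (the orbit with
   alpha-limit (0,0)) exists, is not W^+ (i.e. does not tend to (pi,-pi)),
   and its omega-limit is (pi, -2 pi k). *)
Definition corridor_K1 (a E lam : R) (k : Z) : Prop :=
  (exists th Th, strip_solution a E lam th Th /\ alpha_limit th Th 0 0) /\
  (forall th Th, strip_solution a E lam th Th -> alpha_limit th Th 0 0 ->
     ~ omega_limit th Th PI (- PI) /\
     omega_limit th Th PI (- 2 * PI * IZR k)).

From Stdlib Require Import Reals Lra Lia Classical.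
From Coquelicot Require Import Coquelicot.
Open Scope R_scope.

(* The theta-equation is autonomous and all its solutions in (0, PI) are time translates of
   one another (tan (th/2) grows like exp t), so every orbit of the (E', lam)-flow leaving (0,0)
   can be compared with the connector of the (E, lam)-flow run along the same th. Lowering E to
   E' adds 2 a (E - E') sin^2 th (- sin Th) > 0 to the Theta-equation wherever -PI < Th < 0,
   so W^- stays strictly above the connector z, and the barriers Th = 0 and Th = -PI (where the
   right-hand side is negative because lam <= -1 + a) give -PI < z < W^- < 0. Near th = PI the
   right-hand side has slope >= 1/2 in Th around -PI, so W^- - z would grow linearly if W^-
   stayed near -PI; once W^- has left -PI, the positive right-hand side on [-PI + 1/4, 0) drives
   it to 0, so the omega-limit of W^- is (PI, 0). W^- itself is the limit of the solutions
   started at Th = 0 at times tending to -oo, which contract near (0, 0). *)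

(** * Calculus on the real line *)

Lemma is_derive_continuity_pt (f : R -> R) x l :
  is_derive f x l -> continuity_pt f x.
Proof.
  intro H. apply is_derive_Reals in H.
  apply derivable_continuous_pt. exists l. exact H.
Qed.

Lemma continuity_pt_locally_lt (f : R -> R) x c :
  continuity_pt f x -> f x < c ->
  exists del, 0 < del /\ forall u, Rabs (u - x) < del -> f u < c.
Proof.
  intros Hc Hx. destruct (Hc (c - f x)) as [del [Hdel Hu]]; [lra|].
  exists del. split; [exact Hdel|]. intros u Hux.
  destruct (Req_dec u x) as [->|Hne]; [exact Hx|].
  assert (Hd : R_dist (f u) (f x) < c - f x).
  { apply Hu. split; [split; [exact I | congruence] | exact Hux]. }
  unfold R_dist in Hd. apply Rabs_def2 in Hd. lra.
Qed.

Lemma continuity_pt_locally_gt (f : R -> R) x c :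
  continuity_pt f x -> c < f x ->
  exists del, 0 < del /\ forall u, Rabs (u - x) < del -> c < f u.
Proof.
  intros Hc Hx.
  destruct (continuity_pt_locally_lt (fun u => - f u) x (- c)) as [del [Hdel Hu]].
  - now apply continuity_pt_opp.
  - lra.
  - exists del. split; [exact Hdel|]. intros u Hux. specialize (Hu u Hux). lra.
Qed.

Lemma is_derive_pos_strict_incr (f : R -> R) v l eta :
  is_derive f v l -> 0 < l -> 0 < eta ->
  (exists w, v - eta < w < v /\ f w < f v) /\
  (exists w, v < w < v + eta /\ f v < f w).
Proof.
  intros Hf Hl Heta. apply is_derive_Reals in Hf.
  destruct (Hf (l / 2)) as [del Hdel]; [lra|].
  assert (Hm : 0 < Rmin del eta) by (apply Rmin_pos; [apply cond_pos | lra]).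
  pose proof (Rmin_l del eta). pose proof (Rmin_r del eta).
  assert (Hq : forall h, h <> 0 -> Rabs h < del -> 0 < (f (v + h) - f v) * h).
  { intros h Hh Hhd. specialize (Hdel h Hh Hhd). apply Rabs_def2 in Hdel.
    assert (E : f (v + h) - f v = (f (v + h) - f v) / h * h) by (field; exact Hh).
    rewrite E. replace ((f (v + h) - f v) / h * h * h) with ((f (v + h) - f v) / h * (h * h))
     by ring.
    apply Rmult_lt_0_compat; [lra|]. now apply Rsqr_pos_lt. }
  set (h := Rmin del eta / 2).
  assert (Hh : 0 < h < eta /\ Rabs h < del /\ Rabs (- h) < del)
    by (unfold h; rewrite Rabs_Ropp, Rabs_right; lra).
  split.
  - exists (v - h). split; [lra|].
    specialize (Hq (- h) ltac:(lra) ltac:(lra)). replace (v + - h) with (v - h) in Hq by ring. nra.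
  - exists (v + h). split; [lra|].
    specialize (Hq h ltac:(lra) ltac:(lra)). nra.
Qed.

Lemma is_derive_neg_strict_decr (f : R -> R) v l eta :
  is_derive f v l -> l < 0 -> 0 < eta ->
  (exists w, v - eta < w < v /\ f v < f w) /\
  (exists w, v < w < v + eta /\ f w < f v).
Proof.
  intros Hf Hl Heta.
  destruct (is_derive_pos_strict_incr (fun x => - f x) v (- l) eta)
    as [[w [Hw Hfw]] [w' [Hw' Hfw']]].
  - exact (is_derive_opp f v l Hf).
  - lra.
  - exact Heta.
  - split; [exists w | exists w']; split; auto; lra.
Qed.

(* [v] is the supremum of the times up to which [f] stays above [c]. *)
Lemma downcrossing (f df : R -> R) a b c :
  (forall t, is_derive f t (df t)) -> a < b -> c < f a -> f b <= c ->
  exists v, a < v <= b /\ f v = c /\ df v <= 0.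
Proof.
  intros Hd Hab Ha Hb.
  assert (Hcont : forall t, continuity_pt f t)
    by (intro t; exact (is_derive_continuity_pt _ _ _ (Hd t))).
  set (S := fun w => a <= w <= b /\ forall u, a <= u <= w -> c < f u).
  assert (HSa : S a) by (split; [lra | intros u Hu; replace u with a by lra; exact Ha]).
  destruct (completeness S) as [v [Hub Hlub]].
  { exists b. intros w [Hw _]. lra. }
  { exists a. exact HSa. }
  assert (Hav : a <= v) by (apply Hub, HSa).
  assert (Hvb : v <= b) by (apply Hlub; intros w [Hw _]; lra).
  assert (Hbefore : forall u, a <= u < v -> c < f u).
  { intros u Hu. apply NNPP. intro Hnot.
    assert (Hu_ub : is_upper_bound S u).
    { intros w [Hw Hw']. apply Rnot_lt_le. intro Huw. apply Hnot, Hw'. lra. }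
    specialize (Hlub u Hu_ub). lra. }
  assert (Hfv_le : f v <= c).
  { apply Rnot_lt_le. intro Hlt.
    assert (Hvb' : v < b) by (destruct (Req_dec v b) as [->|]; lra).
    destruct (continuity_pt_locally_gt f v c (Hcont v) Hlt) as [del [Hdel Hnear]].
    set (w := Rmin b (v + del / 2)).
    assert (Hw : v < w <= v + del / 2) by (unfold w; split; [apply Rmin_glb_lt; lra | apply Rmin_r]).
    assert (HSw : S w).
    { assert (w <= b) by apply Rmin_l. split; [lra|].
      intros u Hu. destruct (Rlt_or_le u v); [apply Hbefore; lra|].
      apply Hnear. rewrite Rabs_right; lra. }
    specialize (Hub w HSw). lra. }
  assert (Hav' : a < v) by (destruct (Req_dec a v) as [<-|]; lra).
  assert (Hfv : f v = c).
  { apply Rle_antisym; [exact Hfv_le|]. apply Rnot_lt_le. intro Hlt.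
    destruct (continuity_pt_locally_lt f v c (Hcont v) Hlt) as [del [Hdel Hnear]].
    set (u := Rmax a (v - del / 2)).
    assert (Hu : a <= u < v) by (unfold u; split; [apply Rmax_l | apply Rmax_lub_lt; lra]).
    assert (Huv : v - del / 2 <= u) by (unfold u; apply Rmax_r).
    specialize (Hbefore u Hu). specialize (Hnear u ltac:(rewrite Rabs_left1; lra)). lra. }
  exists v. split; [lra|]. split; [exact Hfv|].
  apply Rnot_lt_le. intro Hpos.
  destruct (is_derive_pos_strict_incr f v (df v) (v - a) (Hd v) Hpos ltac:(lra))
    as [[w [Hw Hfw]] _].
  specialize (Hbefore w ltac:(lra)). lra.
Qed.

Lemma upcrossing (f df : R -> R) a b c :
  (forall t, is_derive f t (df t)) -> a < b -> f a < c -> c <= f b ->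
  exists v, a < v <= b /\ f v = c /\ 0 <= df v.
Proof.
  intros Hd Hab Ha Hb.
  destruct (downcrossing (fun x => - f x) (fun x => - df x) a b (- c)) as [v [Hv [Hfv Hdv]]].
  - intro t. exact (is_derive_opp f t (df t) (Hd t)).
  - exact Hab.
  - lra.
  - lra.
  - exists v. repeat split; lra.
Qed.

Lemma derive_ge_linear_growth (f df : R -> R) m a b :
  a <= b -> (forall t, a <= t <= b -> is_derive f t (df t)) ->
  (forall t, a <= t <= b -> m <= df t) -> f a + m * (b - a) <= f b.
Proof.
  intros Hab Hd Hm.
  destruct (Req_dec a b) as [<-|Hne]; [lra|].
  destruct (MVT_gen f a b df) as [c [Hc Heq]];
    rewrite Rmin_left, Rmax_right in * by lra.
  - intros x Hx. apply Hd. lra.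
  - intros x Hx. apply (is_derive_continuity_pt _ _ _ (Hd x Hx)).
  - specialize (Hm c Hc). nra.
Qed.

Lemma derive_nonneg_le (f df : R -> R) a b :
  a <= b -> (forall t, a <= t <= b -> is_derive f t (df t)) ->
  (forall t, a <= t <= b -> 0 <= df t) -> f a <= f b.
Proof.
  intros Hab Hd Hpos.
  pose proof (derive_ge_linear_growth f df 0 a b Hab Hd Hpos). lra.
Qed.

Lemma is_derive_Rminus (f g : R -> R) x df dg :
  is_derive f x df -> is_derive g x dg -> is_derive (fun t => f t - g t) x (df - dg).
Proof. exact (is_derive_minus f g x df dg). Qed.

Lemma derive_abs_le (f df g dg : R -> R) a b : a <= b ->
  (forall t, a <= t <= b -> is_derive f t (df t)) ->
  (forall t, a <= t <= b -> is_derive g t (dg t)) ->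
  (forall t, a <= t <= b -> Rabs (df t) <= dg t) ->
  Rabs (f b - f a) <= g b - g a.
Proof.
  intros Hab Hf Hg Hb.
  assert (Hup := derive_nonneg_le (fun t => g t - f t) (fun t => dg t - df t) a b Hab).
  assert (Hlo := derive_nonneg_le (fun t => g t + f t) (fun t => dg t + df t) a b Hab).
  apply Rabs_le. split.
  - enough (g a + f a <= g b + f b) by lra. apply Hlo.
    + intros t Ht. exact (is_derive_plus g f t _ _ (Hg t Ht) (Hf t Ht)).
    + intros t Ht. specialize (Hb t Ht). apply Rabs_le_between in Hb. lra.
  - enough (g a - f a <= g b - f b) by lra. apply Hup.
    + intros t Ht. exact (is_derive_Rminus g f t _ _ (Hg t Ht) (Hf t Ht)).
    + intros t Ht. specialize (Hb t Ht). apply Rabs_le_between in Hb. lra.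
Qed.

Lemma derive_bounded_lipschitz (f df : R -> R) M :
  (forall t, is_derive f t (df t)) -> (forall t, Rabs (df t) <= M) ->
  forall t u, Rabs (f t - f u) <= M * Rabs (t - u).
Proof.
  intros Hf HM.
  assert (Hord : forall t u, u <= t -> Rabs (f t - f u) <= M * Rabs (t - u)).
  { intros t u Hut. rewrite (Rabs_right (t - u)) by lra.
    replace (M * (t - u)) with (M * t - M * u) by ring.
    apply (derive_abs_le f df (fun s => M * s) (fun _ => M)); auto.
    intros s _. auto_derive; auto. ring. }
  intros t u. destruct (Rle_or_lt u t) as [H|H]; [now apply Hord|].
  rewrite Rabs_minus_sym, (Rabs_minus_sym t). apply Hord. lra.
Qed.

Lemma derive_zero_const (f : R -> R) :
  (forall t, is_derive f t 0) -> forall t u, f t = f u.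
Proof.
  intros Hd t u.
  pose proof (derive_bounded_lipschitz f (fun _ => 0) 0 Hd
                ltac:(intro; cbv beta; rewrite Rabs_R0; lra) t u) as H.
  rewrite Rmult_0_l in H. pose proof (Rabs_pos (f t - f u)). apply Rminus_diag_uniq, Rabs_eq_0. lra.
Qed.

Lemma is_derive_sqr_exp (e : R -> R) de k t : is_derive e t de ->
  is_derive (fun s => (e s)^2 * exp (k * s)) t ((2 * e t * de + k * (e t)^2) * exp (k * t)).
Proof.
  intro He. auto_derive.
  - exists de. exact He.
  - replace (Derive (fun x => e x) t) with de by (symmetry; exact (is_derive_unique e t de He)).
    ring.
Qed.

Lemma sqr_exp_forward (e de : R -> R) mu a b : a <= b ->
  (forall t, is_derive e t (de t)) ->
  (forall t, a <= t <= b -> e t * de t <= mu * (e t)^2) ->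
  (e b)^2 <= (e a)^2 * exp (2 * mu * (b - a)).
Proof.
  intros Hab Hd Hmu.
  assert (Hg : - ((e a)^2 * exp (- (2 * mu) * a)) <= - ((e b)^2 * exp (- (2 * mu) * b))).
  { apply (derive_nonneg_le (fun s => - ((e s)^2 * exp (- (2 * mu) * s)))
             (fun s => - ((2 * e s * de s + - (2 * mu) * (e s)^2) * exp (- (2 * mu) * s))) a b Hab).
    - intros s _.
      apply (is_derive_opp (fun s => (e s)^2 * exp (- (2 * mu) * s))), is_derive_sqr_exp, Hd.
    - intros s Hs. specialize (Hmu s Hs). pose proof (exp_pos (- (2 * mu) * s)). nra. }
  assert (Hx : exp (- (2 * mu) * b) * exp (2 * mu * (b - a)) = exp (- (2 * mu) * a))
    by (rewrite <- exp_plus; f_equal; ring).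
  pose proof (exp_pos (- (2 * mu) * b)). pose proof (exp_pos (2 * mu * (b - a))).
  apply (Rmult_le_reg_r (exp (- (2 * mu) * b))); [assumption|].
  rewrite Rmult_assoc, (Rmult_comm (exp (2 * mu * (b - a)))), Hx. lra.
Qed.

Lemma sqr_exp_backward (e de : R -> R) mu a b : a <= b ->
  (forall t, is_derive e t (de t)) ->
  (forall t, a <= t <= b -> - mu * (e t)^2 <= e t * de t) ->
  (e a)^2 <= (e b)^2 * exp (2 * mu * (b - a)).
Proof.
  intros Hab Hd Hmu.
  assert (Hg : (e a)^2 * exp ((2 * mu) * a) <= (e b)^2 * exp ((2 * mu) * b)).
  { apply (derive_nonneg_le (fun s => (e s)^2 * exp ((2 * mu) * s))
             (fun s => (2 * e s * de s + (2 * mu) * (e s)^2) * exp ((2 * mu) * s)) a b Hab).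
    - intros s _. apply is_derive_sqr_exp, Hd.
    - intros s Hs. specialize (Hmu s Hs). pose proof (exp_pos ((2 * mu) * s)). nra. }
  assert (Hx : exp ((2 * mu) * a) * exp (2 * mu * (b - a)) = exp ((2 * mu) * b))
    by (rewrite <- exp_plus; f_equal; ring).
  pose proof (exp_pos ((2 * mu) * a)).
  apply (Rmult_le_reg_r (exp ((2 * mu) * a))); [assumption|].
  replace ((e b)^2 * exp (2 * mu * (b - a)) * exp (2 * mu * a)) with ((e b)^2 * exp (2 * mu * b))
    by (rewrite <- Hx; ring).
  exact Hg.
Qed.

Lemma exp_weighted_bound (D dD : R -> R) t0 K L : 0 < L -> D t0 = 0 ->
  (forall s, is_derive D s (dD s)) ->
  (forall s, Rabs (dD s) <= K * exp (2 * L * Rabs (s - t0))) ->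
  forall t, Rabs (D t) <= K * (exp (2 * L * Rabs (t - t0)) - 1) / (2 * L).
Proof.
  intros HL HD0 HD Hb t.
  assert (He0 : exp (2 * L * 0) = 1) by (rewrite Rmult_0_r; apply exp_0).
  destruct (Rle_or_lt t0 t) as [Ht|Ht].
  - rewrite (Rabs_right (t - t0)) by lra.
    assert (Hle := derive_abs_le D dD (fun s => K * exp (2 * L * (s - t0)) / (2 * L))
                     (fun s => K * exp (2 * L * (s - t0))) t0 t Ht).
    rewrite HD0, Rminus_0_r, Rminus_diag, He0 in Hle.
    replace (K * (exp (2 * L * (t - t0)) - 1) / (2 * L))
      with (K * exp (2 * L * (t - t0)) / (2 * L) - K * 1 / (2 * L)) by (field; lra).
    apply Hle; auto.
    + intros s _. auto_derive; auto. unfold Rminus. field. lra.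
    + intros s Hs. rewrite <- (Rabs_right (s - t0)) by lra. apply Hb.
  - rewrite (Rabs_left (t - t0)) by lra.
    assert (Hle := derive_abs_le D dD (fun s => - (K * exp (2 * L * (t0 - s)) / (2 * L)))
                     (fun s => K * exp (2 * L * (t0 - s))) t t0 ltac:(lra)).
    rewrite HD0, Rminus_0_l, Rabs_Ropp, Rminus_diag, He0 in Hle.
    replace (K * (exp (2 * L * - (t - t0)) - 1) / (2 * L))
      with (- (K * 1 / (2 * L)) - - (K * exp (2 * L * (t0 - t)) / (2 * L)))
      by (replace (- (t - t0)) with (t0 - t) by ring; field; lra).
    apply Hle; auto.
    + intros s _. auto_derive; auto. unfold Rminus. field. lra.
    + intros s Hs. replace (t0 - s) with (Rabs (s - t0)) by (rewrite Rabs_left1; lra). apply Hb.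
Qed.

Lemma is_derive_shift (Y : R -> R) c t l :
  is_derive Y (t + c) l -> is_derive (fun s => Y (s + c)) t l.
Proof.
  intro H. replace l with (1 * l) by ring.
  apply (is_derive_comp Y (fun s => s + c) t l 1 H). auto_derive; auto.
Qed.

Lemma filterlim_p_infty_spec (f : R -> R) (q : R) :
  filterlim f (Rbar_locally p_infty) (locally q) <->
  forall eps, 0 < eps -> exists T, forall t, T < t -> Rabs (f t - q) < eps.
Proof.
  split.
  - intros H eps Heps. apply (is_lim_spec f p_infty q) in H.
    destruct (H (mkposreal eps Heps)) as [T HT]. exists T. exact HT.
  - intro H. apply (is_lim_spec f p_infty q). intro eps.
    destruct (H eps (cond_pos eps)) as [T HT]. exists T. exact HT.
Qed.

Lemma filterlim_m_infty_spec (f : R -> R) (q : R) :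
  filterlim f (Rbar_locally m_infty) (locally q) <->
  forall eps, 0 < eps -> exists T, forall t, t < T -> Rabs (f t - q) < eps.
Proof.
  split.
  - intros H eps Heps. apply (is_lim_spec f m_infty q) in H.
    destruct (H (mkposreal eps Heps)) as [T HT]. exists T. exact HT.
  - intro H. apply (is_lim_spec f m_infty q). intro eps.
    destruct (H eps (cond_pos eps)) as [T HT]. exists T. exact HT.
Qed.

Lemma filterlim_p_infty_shift (Y : R -> R) c q :
  filterlim Y (Rbar_locally p_infty) (locally q) ->
  filterlim (fun s => Y (s + c)) (Rbar_locally p_infty) (locally q).
Proof.
  rewrite !filterlim_p_infty_spec. intros H eps He.
  destruct (H eps He) as [T HT]. exists (T - c). intros t Ht. apply HT. lra.
Qed.

Lemma filterlim_m_infty_shift (Y : R -> R) c q :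
  filterlim Y (Rbar_locally m_infty) (locally q) ->
  filterlim (fun s => Y (s + c)) (Rbar_locally m_infty) (locally q).
Proof.
  rewrite !filterlim_m_infty_spec. intros H eps He.
  destruct (H eps He) as [T HT]. exists (T - c). intros t Ht. apply HT. lra.
Qed.

Lemma p_infty_limit_unique (f : R -> R) p q :
  filterlim f (Rbar_locally p_infty) (locally p) ->
  filterlim f (Rbar_locally p_infty) (locally q) -> p = q.
Proof.
  intros Hp Hq.
  apply (is_lim_unique f p_infty p) in Hp. apply (is_lim_unique f p_infty q) in Hq.
  rewrite Hp in Hq. now injection Hq.
Qed.

Lemma exp_pow x k : exp x ^ k = exp (INR k * x).
Proof.
  induction k as [|k IH]; [simpl; rewrite Rmult_0_l, exp_0; reflexivity|].
  rewrite S_INR, <- tech_pow_Rmult, IH, <- exp_plus. f_equal. ring.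
Qed.

Lemma abs_lt_of_sqr_lt x y : 0 < y -> x^2 < y^2 -> Rabs x < y.
Proof. intros Hy H. apply Rabs_lt_between. simpl in H. split; nra. Qed.

Lemma abs_le_of_sqr_le x y : 0 <= y -> x^2 <= y^2 -> Rabs x <= y.
Proof. intros Hy H. apply Rabs_le. simpl in H. split; nra. Qed.

Lemma between_min_max x w xi lo hi : Rmin x w <= xi <= Rmax x w ->
  lo <= x <= hi -> lo <= w <= hi -> lo <= xi <= hi.
Proof.
  intros Hxi Hx Hw. destruct (Rle_or_lt x w).
  - rewrite Rmin_left, Rmax_right in Hxi by lra. lra.
  - rewrite Rmin_right, Rmax_left in Hxi by lra. lra.
Qed.

Lemma mult_lt_of_lt_div K x b : 0 <= K -> 0 <= x -> x < b / (K + 1) -> K * x < b.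
Proof.
  intros HK Hx Hxb.
  assert (x * (K + 1) < b).
  { apply (Rmult_lt_reg_r (/ (K + 1))); [apply Rinv_0_lt_compat; lra|].
    replace (x * (K + 1) * / (K + 1)) with x by (field; lra). exact Hxb. }
  nra.
Qed.

Lemma sin_pos_bounded th : 0 < th < PI -> 0 < sin th <= 1.
Proof. intro H. split; [apply sin_gt_0; lra | apply SIN_bound]. Qed.

Lemma cos_lt_1_strip x : 0 < x < PI -> cos x < 1.
Proof.
  intro Hx. pose proof (sin_pos_bounded x Hx). pose proof (sin2 x). unfold Rsqr in *.
  pose proof (COS_bound x). destruct (Req_dec (cos x) 1) as [Hc|]; [|lra].
  rewrite Hc in *. nra.
Qed.

Lemma sin_ge_on_interval u al be : 0 < al <= be -> be <= PI / 2 -> al <= u <= PI - be ->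
  sin al <= sin u.
Proof.
  intros H1 H2 H3. pose proof PI2_1.
  destruct (Rle_or_lt u (PI / 2)); [apply sin_incr_1; lra|].
  rewrite <- (sin_PI_x u).
  assert (sin al <= sin be) by (apply sin_incr_1; lra).
  assert (sin be <= sin (PI - u)) by (apply sin_incr_1; lra). lra.
Qed.

Lemma cos_ge_near_0 u : Rabs u <= 1/2 -> 7/8 <= cos u.
Proof.
  intro Hu. replace u with (2 * (u / 2)) by field. rewrite cos_2a_sin.
  assert (Hs : Rabs (sin (u / 2)) <= 1/4).
  { destruct (Rle_or_lt 0 (u / 2)) as [H|H].
    - rewrite Rabs_right
        by (apply Rle_ge, sin_ge_0; pose proof PI2_1; apply Rabs_le_between in Hu; lra).
      destruct (Req_dec (u / 2) 0) as [->|Hne]; [rewrite sin_0; lra|].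
      assert (sin (u / 2) < u / 2) by (apply sin_lt_x; lra). apply Rabs_le_between in Hu. lra.
    - rewrite <- Rabs_Ropp, <- sin_neg.
      rewrite Rabs_right
        by (apply Rle_ge, sin_ge_0; pose proof PI2_1; apply Rabs_le_between in Hu; lra).
      assert (sin (- (u / 2)) < - (u / 2)) by (apply sin_lt_x; lra). apply Rabs_le_between in Hu. lra. }
  apply Rabs_le_between in Hs. nra.
Qed.

Lemma cos_le_near_mpi u : - PI <= u <= - PI + 1/2 -> cos u <= - 7/8.
Proof.
  intro Hu. assert (H := cos_ge_near_0 (u + PI) ltac:(rewrite Rabs_right; lra)).
  rewrite neg_cos in H. lra.
Qed.

(** * Sequences, integrals and Picard iteration *)

Lemma geometric_eventually_lt B q eps : 0 <= q < 1 -> 0 < eps -> exists N, B * q^N < eps.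
Proof.
  intros Hq Heps. pose proof (Rabs_pos B).
  destruct (pow_lt_1_zero q ltac:(rewrite Rabs_right; lra) (eps / (Rabs B + 1))) as [N HN].
  { apply Rdiv_lt_0_compat; lra. }
  exists N. specialize (HN N (le_n _)). rewrite Rabs_right in HN by (apply Rle_ge, pow_le; lra).
  assert (Hpow : 0 <= q^N) by (apply pow_le; lra).
  assert (B * q^N <= Rabs B * q^N) by (apply Rmult_le_compat_r; [exact Hpow | apply Rle_abs]).
  assert ((Rabs B + 1) * q^N < eps).
  { apply (Rmult_lt_reg_r (/ (Rabs B + 1))); [apply Rinv_0_lt_compat; lra|].
    replace ((Rabs B + 1) * q^N * / (Rabs B + 1)) with (q^N) by (field; lra). exact HN. }
  nra.
Qed.

Lemma le_of_geometric_slack x y D : (forall k : nat, x <= y + D * (1/2)^k) -> x <= y.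
Proof.
  intro Hk. apply le_epsilon. intros eps Heps.
  destruct (geometric_eventually_lt D (1/2) eps ltac:(lra) Heps) as [N HN].
  specialize (Hk N). lra.
Qed.

Lemma cauchy_geometric_lim (u : nat -> R) B q : 0 <= q < 1 ->
  (forall k m, (k <= m)%nat -> Rabs (u m - u k) <= B * q^k) ->
  is_lim_seq u (real (Lim_seq u)) /\
  forall k, Rabs (real (Lim_seq u) - u k) <= B * q^k.
Proof.
  intros Hq Hu.
  assert (Hcv : ex_finite_lim_seq u).
  { apply ex_lim_seq_cauchy_corr. intro eps.
    destruct (geometric_eventually_lt B q (eps / 2) Hq ltac:(pose proof (cond_pos eps); lra))
      as [N HN].
    exists N. intros n m Hn Hm. pose proof (Hu N n Hn). pose proof (Hu N m Hm).
    replace (u n - u m) with ((u n - u N) - (u m - u N)) by ring.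
    eapply Rle_lt_trans; [apply Rabs_triang|]. rewrite Rabs_Ropp. lra. }
  destruct Hcv as [l Hl].
  rewrite (is_lim_seq_unique u l Hl). simpl. split; [exact Hl|].
  intro k. apply Rnot_lt_le. intro Hlt.
  apply is_lim_seq_spec in Hl.
  destruct (Hl (mkposreal (Rabs (l - u k) - B * q^k) ltac:(lra))) as [N HN]. simpl in HN.
  specialize (HN (max N k) (Nat.le_max_l _ _)). specialize (Hu k (max N k) (Nat.le_max_r _ _)).
  assert (Rabs (l - u k) <= Rabs (u (max N k) - l) + Rabs (u (max N k) - u k)).
  { rewrite <- (Rabs_Ropp (u (max N k) - l)).
    replace (l - u k) with (- (u (max N k) - l) + (u (max N k) - u k)) by ring. apply Rabs_triang. }
  lra.
Qed.

Lemma lipschitz_continuity (g : R -> R) M : 0 <= M ->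
  (forall t u, Rabs (g t - g u) <= M * Rabs (t - u)) -> continuity g.
Proof.
  intros HM Hg t eps Heps.
  exists (eps / (M + 1)). split; [apply Rdiv_lt_0_compat; lra|].
  intros u [_ Hu]. simpl in *. unfold R_dist in *.
  eapply Rle_lt_trans; [apply Hg|].
  apply (Rle_lt_trans _ ((M + 1) * Rabs (u - t))); [apply Rmult_le_compat_r; [apply Rabs_pos | lra]|].
  apply (Rmult_lt_reg_r (/ (M + 1))); [apply Rinv_0_lt_compat; lra|].
  replace ((M + 1) * Rabs (u - t) * / (M + 1)) with (Rabs (u - t)) by (field; lra). exact Hu.
Qed.

Lemma is_derive_RInt_continuity (g : R -> R) t0 t :
  continuity g -> is_derive (fun x => RInt g t0 x) t (g t).
Proof.
  intro Hg. apply (is_derive_RInt g (fun x => RInt g t0 x) t0 t).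
  - apply filter_forall. intro b. apply (@RInt_correct R_CompleteNormedModule), ex_RInt_continuous.
    intros z _. apply continuity_pt_filterlim, Hg.
  - apply continuity_pt_filterlim, Hg.
Qed.

Section Picard.
Variables (f : R -> R -> R) (L M : R).
Hypothesis HL : 0 < L.
Hypothesis Hbound : forall t x, Rabs (f t x) <= M.
Hypothesis Hlip : forall t x w, Rabs (f t x - f t w) <= L * Rabs (x - w).
Hypothesis Hcont : forall y, continuity y -> continuity (fun s => f s (y s)).

Fixpoint picard (t0 y0 : R) (k : nat) : R -> R :=
  match k with
  | O => fun _ => y0
  | S k => fun t => y0 + RInt (fun s => f s (picard t0 y0 k s)) t0 t
  end.

Definition picard_lim (t0 y0 t : R) : R := real (Lim_seq (fun k => picard t0 y0 k t)).

Lemma is_derive_picard_map (y : R -> R) t0 y0 t : continuity y ->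
  is_derive (fun x => y0 + RInt (fun s => f s (y s)) t0 x) t (f t (y t)).
Proof.
  intro Hy. pose proof (is_derive_RInt_continuity _ t0 t (Hcont y Hy)) as H.
  replace (f t (y t)) with (0 + f t (y t)) by ring.
  exact (is_derive_plus (fun _ => y0) _ t 0 _ (is_derive_const y0 t) H).
Qed.

Variables (t0 y0 : R).

(* Measured with the weight [w] (a Bielecki norm), consecutive Picard iterates
   get closer by a factor [1/2]. *)
Let P := picard t0 y0.
Let C := M / (2 * L).
Let w t := exp (2 * L * Rabs (t - t0)).

Lemma bound_nonneg : 0 <= M.
Proof. pose proof (Hbound 0 0). pose proof (Rabs_pos (f 0 0)). lra. Qed.

Lemma picard_const_nonneg : 0 <= C.
Proof.
  unfold C. pose proof bound_nonneg.
  apply Rmult_le_pos; [lra|]. left. apply Rinv_0_lt_compat. lra.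
Qed.

Lemma picard_weight_ge_1 t : 1 <= w t.
Proof.
  unfold w. rewrite <- exp_0. destruct (Req_dec (Rabs (t - t0)) 0) as [->|Hne].
  - rewrite Rmult_0_r. lra.
  - left. apply exp_increasing. pose proof (Rabs_pos (t - t0)). nra.
Qed.

Lemma picard_continuity k : continuity (P k).
Proof.
  induction k as [|k IH]; intro t.
  - apply continuity_pt_const. intros x y. reflexivity.
  - apply (is_derive_continuity_pt _ _ _ (is_derive_picard_map (P k) t0 y0 t IH)).
Qed.

Lemma picard_step k t : Rabs (P (S k) t - P k t) <= C * (1/2)^k * w t.
Proof.
  pose proof picard_const_nonneg as HC. pose proof bound_nonneg as HM.
  revert t. induction k as [|k IH]; intro t.
  - unfold P; simpl. assert (HMC : M * (w t - 1) / (2 * L) = C * w t - C) by (unfold C; field; lra).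
    enough (Rabs (y0 + RInt (fun s => f s y0) t0 t - y0) <= M * (w t - 1) / (2 * L)) by lra.
    apply (exp_weighted_bound (fun x => y0 + RInt (fun s => f s y0) t0 x - y0) (fun s => f s y0)
             t0 M L HL).
    + rewrite RInt_point. unfold zero; simpl. ring.
    + intro s. replace (f s y0) with (f s y0 - 0) by ring. apply is_derive_Rminus.
      * exact (is_derive_picard_map (fun _ => y0) t0 y0 s (picard_continuity 0)).
      * exact (is_derive_const y0 s).
    + intro s. pose proof (picard_weight_ge_1 s). unfold w in *. pose proof (Hbound s y0). nra.
  - set (K := L * (C * (1/2)^k)).
    assert (HK : 0 <= K)
      by (unfold K; apply Rmult_le_pos; [lra | apply Rmult_le_pos; [lra | apply pow_le; lra]]).
    assert (Hb : Rabs (P (S (S k)) t - P (S k) t) <= K * (w t - 1) / (2 * L)).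
    { apply (exp_weighted_bound (fun x => P (S (S k)) x - P (S k) x)
               (fun s => f s (P (S k) s) - f s (P k s)) t0 K L HL).
      + unfold P; simpl. rewrite !RInt_point. unfold zero; simpl. ring.
      + intro s. apply is_derive_Rminus; apply is_derive_picard_map, picard_continuity.
      + intro s. eapply Rle_trans; [apply Hlip|]. unfold K. rewrite Rmult_assoc.
        apply Rmult_le_compat_l; [lra | apply IH]. }
    pose proof (picard_weight_ge_1 t). simpl pow. unfold K in Hb.
    replace (L * (C * (1 / 2) ^ k) * (w t - 1) / (2 * L))
      with (C * (1/2 * (1/2)^k) * (w t - 1)) in Hb
      by (field; lra).
    assert (0 <= C * (1/2 * (1/2)^k))
      by (apply Rmult_le_pos; [exact HC | apply Rmult_le_pos; [lra | apply pow_le; lra]]).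
    nra.
Qed.

Lemma picard_cauchy k m t : (k <= m)%nat ->
  Rabs (P m t - P k t) <= 2 * C * w t * ((1/2)^k - (1/2)^m).
Proof.
  intro Hkm. induction Hkm as [|m Hkm IH].
  - rewrite !Rminus_diag, Rabs_R0. lra.
  - replace (P (S m) t - P k t) with ((P (S m) t - P m t) + (P m t - P k t)) by ring.
    eapply Rle_trans; [apply Rabs_triang|].
    pose proof (picard_step m t). simpl pow. lra.
Qed.

Lemma picard_lim_spec t :
  is_lim_seq (fun k => P k t) (picard_lim t0 y0 t) /\
  forall k, Rabs (picard_lim t0 y0 t - P k t) <= 2 * C * w t * (1/2)^k.
Proof.
  apply (cauchy_geometric_lim (fun k => P k t)); [lra|].
  intros k m Hkm. eapply Rle_trans; [exact (picard_cauchy k m t Hkm)|].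
  pose proof picard_const_nonneg. pose proof (picard_weight_ge_1 t).
  assert (0 <= (1/2)^m) by (apply pow_le; lra).
  assert (0 <= 2 * C * w t) by nra. nra.
Qed.

Lemma picard_lipschitz k t u : Rabs (P k t - P k u) <= M * Rabs (t - u).
Proof.
  destruct k as [|k].
  - unfold P; simpl. rewrite Rminus_diag, Rabs_R0.
    apply Rmult_le_pos; [apply bound_nonneg | apply Rabs_pos].
  - apply (derive_bounded_lipschitz _ (fun s => f s (P k s))); [|intro; apply Hbound].
    intro s. apply is_derive_picard_map, picard_continuity.
Qed.

Lemma picard_lim_lipschitz t u :
  Rabs (picard_lim t0 y0 t - picard_lim t0 y0 u) <= M * Rabs (t - u).
Proof.
  apply (le_of_geometric_slack _ _ (2 * C * w t + 2 * C * w u)). intro k.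
  pose proof (proj2 (picard_lim_spec t) k). pose proof (proj2 (picard_lim_spec u) k).
  pose proof (picard_lipschitz k t u).
  assert (Rabs (picard_lim t0 y0 t - picard_lim t0 y0 u) <=
    Rabs (picard_lim t0 y0 t - P k t) + Rabs (P k t - P k u) + Rabs (picard_lim t0 y0 u - P k u)).
  { rewrite <- (Rabs_Ropp (picard_lim t0 y0 u - P k u)).
    replace (picard_lim t0 y0 t - picard_lim t0 y0 u) with
      ((picard_lim t0 y0 t - P k t) + (P k t - P k u) + - (picard_lim t0 y0 u - P k u)) by ring.
    eapply Rle_trans; [apply Rabs_triang|]. apply Rplus_le_compat_r, Rabs_triang. }
  lra.
Qed.

Lemma picard_lim_continuity : continuity (picard_lim t0 y0).
Proof. exact (lipschitz_continuity _ M bound_nonneg picard_lim_lipschitz). Qed.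

Lemma picard_lim_integral t :
  picard_lim t0 y0 t = y0 + RInt (fun s => f s (picard_lim t0 y0 s)) t0 t.
Proof.
  set (Y := picard_lim t0 y0).
  enough (Rabs (Y t - (y0 + RInt (fun s => f s (Y s)) t0 t)) <= 0)
    by (pose proof (Rabs_pos (Y t - (y0 + RInt (fun s => f s (Y s)) t0 t)));
        apply Rminus_diag_uniq, Rabs_eq_0; lra).
  apply (le_of_geometric_slack _ _ (2 * C * w t)). intro k.
  pose proof (picard_weight_ge_1 t) as Hw. pose proof picard_const_nonneg as HC.
  pose proof (proj2 (picard_lim_spec t) (S k)) as HY. simpl pow in HY.
  set (K := L * (2 * C * (1/2)^k)).
  assert (HI : Rabs (P (S k) t - (y0 + RInt (fun s => f s (Y s)) t0 t)) <= K * (w t - 1) / (2 * L)).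
  { apply (exp_weighted_bound (fun x => P (S k) x - (y0 + RInt (fun s => f s (Y s)) t0 x))
             (fun s => f s (P k s) - f s (Y s)) t0 K L HL).
    - unfold P; simpl. rewrite !RInt_point. unfold zero; simpl. ring.
    - intro s. apply is_derive_Rminus; apply is_derive_picard_map;
        [apply picard_continuity | apply picard_lim_continuity].
    - intro s. eapply Rle_trans; [apply Hlip|]. rewrite Rabs_minus_sym. unfold K.
      rewrite Rmult_assoc. apply Rmult_le_compat_l; [lra|].
      pose proof (proj2 (picard_lim_spec s) k) as Hs. fold Y in Hs. unfold w in *. lra. }
  replace (K * (w t - 1) / (2 * L)) with (C * (1/2)^k * (w t - 1)) in HI by (unfold K; field; lra).
  replace (Y t - (y0 + RInt (fun s => f s (Y s)) t0 t)) with
    ((Y t - P (S k) t) + (P (S k) t - (y0 + RInt (fun s => f s (Y s)) t0 t))) by ring.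
  eapply Rle_trans; [apply Rabs_triang|].
  assert (0 <= C * (1/2)^k) by (apply Rmult_le_pos; [exact HC | apply pow_le; lra]).
  fold Y in HY. nra.
Qed.

Theorem picard_lim_solution :
  picard_lim t0 y0 t0 = y0 /\
  forall t, is_derive (picard_lim t0 y0) t (f t (picard_lim t0 y0 t)).
Proof.
  split.
  - rewrite picard_lim_integral, RInt_point. unfold zero; simpl. ring.
  - intro t.
    apply (is_derive_ext (fun x => y0 + RInt (fun s => f s (picard_lim t0 y0 s)) t0 x)).
    + intro x. symmetry. apply picard_lim_integral.
    + apply is_derive_picard_map, picard_lim_continuity.
Qed.

End Picard.

(** * The right-hand side of the Theta-equation *)

Lemma theta_rhs_continuity a E lam (u v : R -> R) : continuity u -> continuity v ->
  continuity (fun s => theta_rhs a E lam (u s) (v s)).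
Proof.
  intros Hu Hv. unfold theta_rhs.
  assert (Hsu := continuity_comp u sin Hu continuity_sin).
  assert (Hcu := continuity_comp u cos Hu continuity_cos).
  assert (Hsv := continuity_comp v sin Hv continuity_sin).
  assert (Hcv := continuity_comp v cos Hv continuity_cos).
  assert (Hc : forall c, continuity (fun _ => c))
    by (intro c; apply continuity_const; intros ? ?; auto).
  repeat first [ apply continuity_minus | apply continuity_plus | apply continuity_mult
               | apply continuity_opp | apply Hsu | apply Hcu | apply Hsv | apply Hcv | apply Hc ].
Qed.

Section ThetaRhs.
Variables (a E lam : R).
Hypothesis Ha : 0 < a < 1/2.
Hypothesis HE : 0 <= E <= 1.

Definition theta_rhs_dx (th x : R) : R :=
  2 * a * sin th * cos th * sin x + 2 * a * E * (sin th)^2 * cos x - cos x.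

Lemma theta_rhs_is_derive th x :
  is_derive (fun y => theta_rhs a E lam th y) x (theta_rhs_dx th x).
Proof. unfold theta_rhs, theta_rhs_dx. auto_derive; auto. ring. Qed.

Lemma theta_rhs_MVT th x w : exists xi, Rmin x w <= xi <= Rmax x w /\
  theta_rhs a E lam th x - theta_rhs a E lam th w = theta_rhs_dx th xi * (x - w).
Proof.
  destruct (MVT_gen (fun y => theta_rhs a E lam th y) w x (theta_rhs_dx th)) as [xi [Hxi Heq]].
  - intros y _. apply theta_rhs_is_derive.
  - intros y _. exact (is_derive_continuity_pt _ _ _ (theta_rhs_is_derive th y)).
  - exists xi. rewrite Rmin_comm, Rmax_comm. auto.
Qed.

(* The terms of [theta_rhs] and [theta_rhs_dx] are bounded through [s := sin th]
   with [0 < s <= 1], [s^2 <= s] and [0 <= 2 a E <= 2 a]. *)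
Ltac strip_facts th :=
  let Hs := fresh in let Hs2 := fresh in let HaE := fresh in let Has := fresh in let HaEs := fresh in
  pose proof (sin_pos_bounded th ltac:(assumption)) as Hs;
  assert (Hs2 : 0 <= (sin th)^2 <= sin th) by (simpl; nra);
  assert (HaE : 0 <= 2 * a * E <= 2 * a) by nra;
  assert (Has : 0 <= 2 * a * sin th <= 2 * a) by nra;
  assert (HaEs : 0 <= 2 * a * E * (sin th)^2 <= 2 * a * sin th) by nra;
  pose proof (COS_bound th).

Lemma theta_rhs_dx_abs_le th x : 0 < th < PI -> Rabs (theta_rhs_dx th x) <= 1 + 4 * a.
Proof.
  intro Hth. unfold theta_rhs_dx. strip_facts th.
  pose proof (COS_bound x). pose proof (SIN_bound x).
  assert (-1 <= cos th * sin x <= 1) by (split; nra).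
  assert (Hb1 : - (2 * a) <= 2 * a * sin th * (cos th * sin x) <= 2 * a) by (split; nra).
  assert (Hb2 : - (2 * a) <= 2 * a * E * ((sin th)^2 * cos x) <= 2 * a)
    by (assert (-1 <= (sin th)^2 * cos x <= 1) by (split; nra); split; nra).
  apply Rabs_le. split; nra.
Qed.

Lemma theta_rhs_dx_le_near_0 th x : 0 < th < PI -> sin th <= 1/8 -> Rabs x <= 1/2 ->
  theta_rhs_dx th x <= - 1/2.
Proof.
  intros Hth Hs Hx. unfold theta_rhs_dx. strip_facts th.
  pose proof (cos_ge_near_0 x Hx). pose proof (COS_bound x). pose proof (SIN_bound x).
  assert (2 * a * sin th * (cos th * sin x) <= 2 * a * sin th)
    by (assert (cos th * sin x <= 1) by nra; nra).
  assert (2 * a * E * ((sin th)^2 * cos x) <= 2 * a * sin th) by nra.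
  nra.
Qed.

Lemma theta_rhs_dx_ge_near_mpi th x : 0 < th < PI -> sin th <= 1/8 ->
  - PI <= x <= - PI + 1/2 -> 1/2 <= theta_rhs_dx th x.
Proof.
  intros Hth Hs Hx. unfold theta_rhs_dx. strip_facts th.
  pose proof (cos_le_near_mpi x Hx). pose proof (COS_bound x). pose proof (SIN_bound x).
  assert (- (2 * a * sin th) <= 2 * a * sin th * (cos th * sin x))
    by (assert (-1 <= cos th * sin x) by nra; nra).
  assert (- (2 * a * sin th) <= 2 * a * E * ((sin th)^2 * cos x)) by nra.
  nra.
Qed.

Lemma theta_rhs_abs_le th x : 0 < th < PI ->
  Rabs (theta_rhs a E lam th x) <= 1 + 4 * a + 2 * Rabs lam.
Proof.
  intro Hth. unfold theta_rhs. strip_facts th.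
  pose proof (COS_bound x). pose proof (SIN_bound x).
  assert (Hb1 : - (2 * a) <= 2 * a * sin th * (cos th * cos x) <= 2 * a)
    by (assert (-1 <= cos th * cos x <= 1) by (split; nra); split; nra).
  assert (Hb2 : - (2 * a) <= 2 * a * E * ((sin th)^2 * sin x) <= 2 * a)
    by (assert (-1 <= (sin th)^2 * sin x <= 1) by (split; nra); split; nra).
  assert (Hb3 : Rabs (2 * lam * sin th) <= 2 * Rabs lam).
  { rewrite !Rabs_mult, (Rabs_right 2), (Rabs_right (sin th)) by lra.
    pose proof (Rabs_pos lam). nra. }
  apply Rabs_le_between in Hb3.
  apply Rabs_le. split; nra.
Qed.

Lemma theta_rhs_ge th x : 0 < th < PI ->
  - sin x - (4 * a + 2 * Rabs lam) * sin th <= theta_rhs a E lam th x.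
Proof.
  intro Hth. unfold theta_rhs. strip_facts th.
  pose proof (COS_bound x). pose proof (SIN_bound x).
  assert (2 * a * sin th * (cos th * cos x) <= 2 * a * sin th)
    by (assert (cos th * cos x <= 1) by nra; nra).
  assert (- (2 * a * sin th) <= 2 * a * E * ((sin th)^2 * sin x)) by nra.
  assert (- (2 * Rabs lam * sin th) <= 2 * lam * sin th)
    by (pose proof (Rle_abs (- lam)); rewrite Rabs_Ropp in *; nra).
  nra.
Qed.

Lemma theta_rhs_ge_band th x al : 0 < th < PI ->
  0 < al <= 1/4 -> - PI + 1/4 <= x <= - al ->
  (4 * a + 2 * Rabs lam) * sin th <= sin al / 2 -> sin al / 2 <= theta_rhs a E lam th x.
Proof.
  intros Hth Hal Hx Hs. pose proof PI2_1.
  pose proof (theta_rhs_ge th x Hth).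
  assert (sin al <= sin (- x)) by (apply (sin_ge_on_interval (- x) al (1/4)); lra).
  rewrite sin_neg in *. lra.
Qed.

Hypothesis Hlam : lam <= -1 + a.

Lemma theta_rhs_neg_upper th x : 0 < th < PI -> 0 <= x <= PI / 2 ->
  theta_rhs a E lam th x < 0.
Proof.
  intros Hth Hx. unfold theta_rhs. strip_facts th.
  pose proof (COS_bound x). pose proof (SIN_bound x).
  assert (0 <= sin x) by (apply sin_ge_0; pose proof PI2_1; lra).
  assert (- (2 * a * sin th * (cos th * cos x)) <= 2 * a * sin th)
    by (assert (-1 <= cos th * cos x) by nra; nra).
  assert (2 * a * E * ((sin th)^2 * sin x) <= 2 * a * sin x)
    by (assert (0 <= E * (sin th)^2 <= 1) by (split; nra); nra).
  nra.
Qed.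

Lemma theta_rhs_neg_lower th x : 0 < th < PI -> - 2 * PI < x <= - PI ->
  theta_rhs a E lam th x < 0.
Proof.
  intros Hth Hx. unfold theta_rhs.
  assert (Hsx : sin x = - sin (x + PI)) by (rewrite neg_sin; ring).
  assert (Hcx : cos x = - cos (x + PI)) by (rewrite neg_cos; ring).
  assert (Hw : sin (x + PI) <= 0).
  { rewrite <- (Ropp_involutive (sin (x + PI))), <- sin_neg.
    assert (0 <= sin (- (x + PI))) by (apply sin_ge_0; lra). lra. }
  rewrite Hsx, Hcx. strip_facts th.
  pose proof (COS_bound (x + PI)). pose proof (SIN_bound (x + PI)).
  assert (2 * a * sin th * (cos th * cos (x + PI)) <= 2 * a * sin th)
    by (assert (cos th * cos (x + PI) <= 1) by nra; nra).
  assert (- (2 * a * sin (x + PI)) >= - (2 * a * E * ((sin th)^2 * sin (x + PI))))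
    by (assert (0 <= E * (sin th)^2 <= 1) by (split; nra); nra).
  nra.
Qed.

End ThetaRhs.

(** * The theta-equation *)

Definition theta_solution (th : R -> R) : Prop :=
  forall t, 0 < th t < PI /\ is_derive th t (sin (th t)).

Definition Theta_solution (a E lam : R) (th Y : R -> R) : Prop :=
  forall t, is_derive Y t (theta_rhs a E lam (th t) (Y t)).

Lemma strip_solutionP a E lam th Th :
  strip_solution a E lam th Th <-> theta_solution th /\ Theta_solution a E lam th Th.
Proof.
  split.
  - intro H. split; intro t; destruct (H t) as [H1 [H2 H3]]; [split|]; assumption.
  - intros [H1 H2] t. destruct (H1 t). split; [|split]; auto.
Qed.

(* [tan_half x = tan (x / 2)], which turns [th' = sin th] into [u' = u]. *)
Definition tan_half (x : R) : R := (1 - cos x) / sin x.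

Lemma tan_half_pos x : 0 < x < PI -> 0 < tan_half x.
Proof.
  intro Hx. pose proof (sin_pos_bounded x Hx). pose proof (cos_lt_1_strip x Hx).
  apply Rdiv_lt_0_compat; lra.
Qed.

Lemma cos_tan_half x : 0 < x < PI -> cos x * (1 + (tan_half x)^2) = 1 - (tan_half x)^2.
Proof.
  intro Hx. pose proof (sin_pos_bounded x Hx) as Hs. pose proof (sin2 x) as Hsc. unfold Rsqr in Hsc.
  assert (Hp : tan_half x * sin x = 1 - cos x) by (unfold tan_half; field; lra).
  apply (Rmult_eq_reg_r ((sin x)^2)); [|apply pow_nonzero; lra].
  replace (cos x * (1 + tan_half x ^ 2) * sin x ^ 2)
    with (cos x * (sin x * sin x + (tan_half x * sin x)^2)) by ring.
  replace ((1 - tan_half x ^ 2) * sin x ^ 2) with (sin x * sin x - (tan_half x * sin x)^2) by ring.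
  rewrite Hp, Hsc. ring.
Qed.

Lemma tan_half_inj x y : 0 < x < PI -> 0 < y < PI -> tan_half x = tan_half y -> x = y.
Proof.
  intros Hx Hy Hxy. apply cos_inj; try lra.
  pose proof (cos_tan_half x Hx) as Ex. pose proof (cos_tan_half y Hy) as Ey. rewrite Hxy in Ex.
  assert (0 < 1 + tan_half y ^ 2) by (pose proof (pow2_ge_0 (tan_half y)); lra).
  apply (Rmult_eq_reg_r (1 + tan_half y ^ 2)); lra.
Qed.

Lemma theta_solution_tan_half th : theta_solution th ->
  forall t, tan_half (th t) = tan_half (th 0) * exp t.
Proof.
  intro Hth.
  assert (Hg : forall t, is_derive (fun s => tan_half (th s) * exp (- s)) t 0).
  { intro t. destruct (Hth t) as [Hr Hd]. pose proof (sin_pos_bounded _ Hr).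
    unfold tan_half. auto_derive.
    - repeat split; try (exists (sin (th t)); exact Hd). lra.
    - replace (Derive (fun x => th x) t) with (sin (th t))
        by (symmetry; exact (is_derive_unique th t _ Hd)).
      pose proof (sin2 (th t)) as Hsc. unfold Rsqr in Hsc. field_simplify; [|lra].
      unfold Rdiv. apply Rmult_eq_0_compat_r.
      replace (sin (th t) ^ 3) with (sin (th t) * (sin (th t) * sin (th t))) by ring.
      rewrite Hsc. ring. }
  intro t. pose proof (derive_zero_const _ Hg t 0) as Ht. cbv beta in Ht.
  rewrite Ropp_0, exp_0, Rmult_1_r in Ht. rewrite <- Ht, Rmult_assoc, <- exp_plus.
  replace (- t + t) with 0 by ring. rewrite exp_0. ring.
Qed.

Lemma theta_solution_translate th1 th2 : theta_solution th1 -> theta_solution th2 ->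
  exists c, forall t, th2 t = th1 (t + c).
Proof.
  intros H1 H2.
  pose proof (tan_half_pos _ (proj1 (H1 0))). pose proof (tan_half_pos _ (proj1 (H2 0))).
  exists (ln (tan_half (th2 0) / tan_half (th1 0))). intro t.
  apply tan_half_inj; [apply H2 | apply H1|].
  rewrite (theta_solution_tan_half th2 H2 t), (theta_solution_tan_half th1 H1), exp_plus, exp_ln.
  - field. lra.
  - apply Rdiv_lt_0_compat; lra.
Qed.

Lemma theta_solution_sin_small_m_infty th : theta_solution th ->
  filterlim th (Rbar_locally m_infty) (locally 0) ->
  forall eta, 0 < eta -> exists T, forall t, t <= T -> sin (th t) < eta.
Proof.
  intros Hth Hl eta He. destruct (proj1 (filterlim_m_infty_spec th 0) Hl eta He) as [T HT].
  exists (T - 1). intros t Ht. specialize (HT t ltac:(lra)).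
  destruct (Hth t) as [Hr _]. rewrite Rminus_0_r, Rabs_right in HT by lra.
  assert (sin (th t) < th t) by (apply sin_lt_x; lra). lra.
Qed.

Lemma theta_solution_sin_small_p_infty th : theta_solution th ->
  filterlim th (Rbar_locally p_infty) (locally PI) ->
  forall eta, 0 < eta -> exists T, forall t, T <= t -> sin (th t) < eta.
Proof.
  intros Hth Hl eta He. destruct (proj1 (filterlim_p_infty_spec th PI) Hl eta He) as [T HT].
  exists (T + 1). intros t Ht. specialize (HT t ltac:(lra)).
  destruct (Hth t) as [Hr _]. rewrite Rabs_left in HT by lra.
  rewrite <- sin_PI_x. assert (sin (PI - th t) < PI - th t) by (apply sin_lt_x; lra). lra.
Qed.

(** * The Theta-equation along a fixed theta *)

Section AlongTheta.
Variables (a E lam : R) (th : R -> R).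
Hypothesis Ha : 0 < a < 1/2.
Hypothesis HE : 0 <= E <= 1.
Hypothesis Hth : theta_solution th.

Let f t x := theta_rhs a E lam (th t) x.

Lemma Theta_rhs_lipschitz t x w : Rabs (f t x - f t w) <= (1 + 4 * a) * Rabs (x - w).
Proof.
  unfold f. destruct (theta_rhs_MVT a E lam (th t) x w) as [xi [_ Hxi]].
  rewrite Hxi, Rabs_mult. apply Rmult_le_compat_r; [apply Rabs_pos|].
  apply theta_rhs_dx_abs_le; [exact Ha | exact HE | apply Hth].
Qed.

Definition Theta_ivp (t0 y0 : R) : R -> R := picard_lim f t0 y0.

Lemma Theta_ivp_spec t0 y0 :
  Theta_ivp t0 y0 t0 = y0 /\ Theta_solution a E lam th (Theta_ivp t0 y0).
Proof.
  apply (picard_lim_solution f (1 + 4 * a) (1 + 4 * a + 2 * Rabs lam)); [lra | | | ].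
  - intros t x. apply theta_rhs_abs_le; [exact Ha | exact HE | apply Hth].
  - exact Theta_rhs_lipschitz.
  - intros y Hy. apply theta_rhs_continuity; [|exact Hy].
    intro t. exact (is_derive_continuity_pt _ _ _ (proj2 (Hth t))).
Qed.

Lemma Theta_gronwall_backward Y1 Y2 t t0 :
  Theta_solution a E lam th Y1 -> Theta_solution a E lam th Y2 -> t <= t0 ->
  (Y1 t - Y2 t)^2 <= (Y1 t0 - Y2 t0)^2 * exp (2 * (1 + 4 * a) * (t0 - t)).
Proof.
  intros H1 H2 Ht.
  apply (sqr_exp_backward (fun s => Y1 s - Y2 s) (fun s => f s (Y1 s) - f s (Y2 s))); [exact Ht| |].
  - intro s. apply is_derive_Rminus; [apply H1 | apply H2].
  - intros s _. pose proof (Theta_rhs_lipschitz s (Y1 s) (Y2 s)) as Hl.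
    set (e := Y1 s - Y2 s) in *. set (de := f s (Y1 s) - f s (Y2 s)) in *.
    assert (Hprod : Rabs (e * de) <= (1 + 4 * a) * e^2).
    { rewrite Rabs_mult, <- (pow2_abs e).
      pose proof (Rabs_pos e). simpl. nra. }
    apply Rabs_le_between in Hprod. lra.
Qed.

(* Near [th = 0] and [Th = 0] the rhs has slope [<= -1/2] in [Th]. *)
Lemma Theta_contraction_near_0 Y1 Y2 t0 T :
  Theta_solution a E lam th Y1 -> Theta_solution a E lam th Y2 -> t0 <= T ->
  (forall t, t0 <= t <= T -> sin (th t) <= 1/8 /\ Rabs (Y1 t) <= 1/2 /\ Rabs (Y2 t) <= 1/2) ->
  (Y1 T - Y2 T)^2 <= (Y1 t0 - Y2 t0)^2 * exp (- (T - t0)).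
Proof.
  intros H1 H2 HT Hb.
  replace (- (T - t0)) with (2 * (- (1/2)) * (T - t0)) by field.
  apply (sqr_exp_forward (fun s => Y1 s - Y2 s) (fun s => f s (Y1 s) - f s (Y2 s))); [exact HT| |].
  - intro s. apply is_derive_Rminus; [apply H1 | apply H2].
  - intros s Hs. destruct (Hb s Hs) as [Hsin [B1 B2]].
    unfold f. destruct (theta_rhs_MVT a E lam (th s) (Y1 s) (Y2 s)) as [xi [Hxi Heq]].
    rewrite Heq.
    apply Rabs_le_between in B1. apply Rabs_le_between in B2.
    assert (Hxi' : Rabs xi <= 1/2) by (apply Rabs_le, (between_min_max _ _ _ _ _ Hxi B1 B2)).
    pose proof (theta_rhs_dx_le_near_0 a E Ha HE (th s) xi (proj1 (Hth s)) Hsin Hxi').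
    assert (0 <= (Y1 s - Y2 s)^2) by apply pow2_ge_0. simpl in *. nra.
Qed.

Hypothesis Hlam : lam <= -1 + a.

Lemma Theta_band_invariant Y t0 T d : Theta_solution a E lam th Y -> 0 < d <= 1/2 ->
  (forall t, t0 <= t <= T -> (4 * a + 2 * Rabs lam) * sin (th t) < sin d) ->
  Rabs (Y t0) < d -> forall t, t0 <= t <= T -> Rabs (Y t) < d.
Proof.
  intros HY Hd Hs H0 t Ht. pose proof PI2_1.
  apply Rabs_lt_between. apply Rabs_lt_between in H0.
  destruct (Req_dec t t0) as [->|Hne]; [exact H0|].
  split.
  - apply Rnot_le_lt. intro Hle.
    destruct (downcrossing Y (fun s => f s (Y s)) t0 t (- d)) as [v [Hv [HYv Hdv]]]; auto; try lra.
    unfold f in Hdv. rewrite HYv in Hdv.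
    pose proof (theta_rhs_ge a E lam Ha HE (th v) (- d) (proj1 (Hth v))).
    rewrite sin_neg in H1. specialize (Hs v ltac:(lra)). lra.
  - apply Rnot_le_lt. intro Hle.
    destruct (upcrossing Y (fun s => f s (Y s)) t0 t d) as [v [Hv [HYv Hdv]]]; auto; try lra.
    unfold f in Hdv. rewrite HYv in Hdv.
    pose proof (theta_rhs_neg_upper a E lam Ha HE Hlam (th v) d (proj1 (Hth v)) ltac:(lra)). lra.
Qed.

(* The rhs is negative on [0, PI/2]: coming from [0] at [-oo], [Y] can never climb
   through a positive level. *)
Lemma Theta_unstable_neg Y : Theta_solution a E lam th Y ->
  filterlim Y (Rbar_locally m_infty) (locally 0) -> forall t, Y t < 0.
Proof.
  intros HY Hl t1. pose proof PI2_1. apply Rnot_le_lt. intro Hge.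
  assert (Hpos : exists t2, t2 <= t1 /\ 0 < Y t2).
  { destruct (Rlt_or_le 0 (Y t1)) as [Hlt|Hle]; [exists t1; split; lra|].
    assert (Hd : f t1 (Y t1) < 0)
      by (replace (Y t1) with 0 by lra; apply theta_rhs_neg_upper; auto; [apply Hth | lra]).
    destruct (is_derive_neg_strict_decr Y t1 _ 1 (HY t1) Hd ltac:(lra)) as [[w [Hw HYw]] _].
    exists w. split; lra. }
  destruct Hpos as [t2 [Ht2 HY2]].
  set (c := Rmin (Y t2) (PI / 2) / 2).
  assert (Hc : 0 < c < Y t2 /\ c <= PI / 2)
    by (unfold c; pose proof (Rmin_l (Y t2) (PI / 2)); pose proof (Rmin_r (Y t2) (PI / 2));
        assert (0 < Rmin (Y t2) (PI / 2)) by (apply Rmin_pos; lra); lra).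
  destruct (proj1 (filterlim_m_infty_spec Y 0) Hl c ltac:(lra)) as [T HT].
  set (t0 := Rmin T t2 - 1).
  assert (Ht0 : t0 < T /\ t0 < t2)
    by (unfold t0; pose proof (Rmin_l T t2); pose proof (Rmin_r T t2); lra).
  specialize (HT t0 (proj1 Ht0)). rewrite Rminus_0_r in HT. apply Rabs_lt_between in HT.
  destruct (upcrossing Y (fun s => f s (Y s)) t0 t2 c) as [v [Hv [HYv Hdv]]]; auto; try lra.
  unfold f in Hdv. rewrite HYv in Hdv.
  pose proof (theta_rhs_neg_upper a E lam Ha HE Hlam (th v) c (proj1 (Hth v)) ltac:(lra)). lra.
Qed.

(* The rhs is negative on (-2 PI, -PI]: once below [-PI], [Y] can never climb back
   towards [-PI]. *)
Lemma Theta_stable_above_mpi Y : Theta_solution a E lam th Y ->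
  filterlim Y (Rbar_locally p_infty) (locally (- PI)) -> forall t, - PI < Y t.
Proof.
  intros HY Hl t1. pose proof PI2_1. apply Rnot_le_lt. intro Hle.
  assert (Hbelow : exists t2, t1 <= t2 /\ Y t2 < - PI).
  { destruct (Rlt_or_le (Y t1) (- PI)) as [Hlt|Hge]; [exists t1; split; lra|].
    assert (Hd : f t1 (Y t1) < 0)
      by (replace (Y t1) with (- PI) by lra; apply theta_rhs_neg_lower; auto; [apply Hth | lra]).
    destruct (is_derive_neg_strict_decr Y t1 _ 1 (HY t1) Hd ltac:(lra)) as [_ [w [Hw HYw]]].
    exists w. split; lra. }
  destruct Hbelow as [t2 [Ht2 HY2]].
  set (c := (Rmax (Y t2) (- PI - 1) - PI) / 2).
  assert (Hc : Y t2 < c < - PI /\ - 2 * PI < c)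
    by (unfold c; pose proof (Rmax_l (Y t2) (- PI - 1)); pose proof (Rmax_r (Y t2) (- PI - 1));
        assert (Rmax (Y t2) (- PI - 1) < - PI) by (apply Rmax_lub_lt; lra); lra).
  destruct (proj1 (filterlim_p_infty_spec Y (- PI)) Hl (- PI - c) ltac:(lra)) as [T HT].
  set (t3 := Rmax T t2 + 1).
  assert (Ht3 : T < t3 /\ t2 < t3)
    by (unfold t3; pose proof (Rmax_l T t2); pose proof (Rmax_r T t2); lra).
  specialize (HT t3 (proj1 Ht3)). apply Rabs_lt_between in HT.
  destruct (upcrossing Y (fun s => f s (Y s)) t2 t3 c) as [v [Hv [HYv Hdv]]]; auto; try lra.
  unfold f in Hdv. rewrite HYv in Hdv.
  pose proof (theta_rhs_neg_lower a E lam Ha HE Hlam (th v) c (proj1 (Hth v)) ltac:(lra)). lra.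
Qed.

End AlongTheta.

(** * The unstable orbit W^- *)

Section UnstableManifold.
Variables (a E lam : R) (th : R -> R).
Hypothesis Ha : 0 < a < 1/2.
Hypothesis HE : 0 <= E <= 1.
Hypothesis Hlam : lam <= -1 + a.
Hypothesis Hth : theta_solution th.
Hypothesis Hth0 : filterlim th (Rbar_locally m_infty) (locally 0).

Let K := 4 * a + 2 * Rabs lam.

Lemma Theta_band_threshold d : 0 < d <= 1/2 -> exists T, forall t, t <= T ->
  K * sin (th t) < sin d /\ sin (th t) <= 1/8.
Proof.
  intro Hd.
  assert (Hsd : 0 < sin d) by (apply sin_gt_0; pose proof PI2_1; lra).
  assert (HK : 0 <= K) by (unfold K; pose proof (Rabs_pos lam); lra).
  destruct (theta_solution_sin_small_m_infty th Hth Hth0 (Rmin (1/8) (sin d / (K + 1)))) as [T HT].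
  { apply Rmin_pos; [lra | apply Rdiv_lt_0_compat; lra]. }
  exists T. intros t Ht. specialize (HT t Ht).
  pose proof (Rmin_l (1/8) (sin d / (K + 1))). pose proof (Rmin_r (1/8) (sin d / (K + 1))).
  pose proof (sin_pos_bounded _ (proj1 (Hth t))).
  split; [|lra].
  apply (mult_lt_of_lt_div K); lra.
Qed.

(* [W^-] is the limit of the solutions [Y k] started at [0] at the times [T0 - k]:
   they stay in the band [|Th| < 1/2], where the flow contracts at rate [exp (-t/2)]. *)
Section Approximants.
Variable T0 : R.
Hypothesis HT0 : forall t, t <= T0 -> K * sin (th t) < sin (1/2) /\ sin (th t) <= 1/8.

Let Y k := Theta_ivp a E lam th (T0 - INR k) 0.
Let q := exp (- (1/2)).

Lemma approximant_spec k : Y k (T0 - INR k) = 0 /\ Theta_solution a E lam th (Y k).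
Proof. exact (Theta_ivp_spec a E lam th Ha HE Hth (T0 - INR k) 0). Qed.

Lemma approximant_band k d T : 0 < d <= 1/2 -> T <= T0 ->
  (forall t, t <= T -> K * sin (th t) < sin d) ->
  forall t, T0 - INR k <= t <= T -> Rabs (Y k t) < d.
Proof.
  intros Hd HT Hs t Ht. destruct (approximant_spec k) as [H0 Hsol].
  apply (Theta_band_invariant a E lam th Ha HE Hth Hlam (Y k) (T0 - INR k) T d Hsol Hd).
  - intros s Hs'. apply Hs. lra.
  - rewrite H0, Rabs_R0. lra.
  - exact Ht.
Qed.

Lemma q_range : 0 <= q < 1.
Proof.
  unfold q. pose proof (exp_pos (- (1/2))). pose proof (exp_increasing (- (1/2)) 0 ltac:(lra)).
  rewrite exp_0 in *. lra.
Qed.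

Lemma approximant_cauchy k m : (k <= m)%nat -> Rabs (Y m T0 - Y k T0) <= 1/2 * q^k.
Proof.
  intro Hkm.
  assert (Hmk : INR k <= INR m) by (apply le_INR; exact Hkm).
  pose proof (pos_INR k).
  assert (Hband : forall t, T0 - INR k <= t <= T0 -> Rabs (Y m t) <= 1/2 /\ Rabs (Y k t) <= 1/2).
  { intros t Ht. split; left; apply (approximant_band _ (1/2) T0); try lra;
      intros s Hs; apply HT0; exact Hs. }
  pose proof (Theta_contraction_near_0 a E lam th Ha HE Hth (Y m) (Y k) (T0 - INR k) T0
                (proj2 (approximant_spec m)) (proj2 (approximant_spec k)) ltac:(lra)) as Hc.
  rewrite (proj1 (approximant_spec k)), Rminus_0_r in Hc.
  specialize (Hc ltac:(intros t Ht; split; [apply HT0; lra | apply Hband; exact Ht])).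
  assert (Hqk : (1/2 * q^k)^2 = 1/4 * exp (- (T0 - (T0 - INR k)))).
  { unfold q. rewrite exp_pow.
    replace (- (T0 - (T0 - INR k))) with (INR k * - (1/2) + INR k * - (1/2)) by field.
    rewrite exp_plus. field. }
  apply abs_le_of_sqr_le; [pose proof (pow_le q k (proj1 q_range)); lra|].
  rewrite Hqk. eapply Rle_trans; [exact Hc|].
  apply Rmult_le_compat_r; [left; apply exp_pos|].
  destruct (Hband (T0 - INR k) ltac:(lra)) as [Hm _]. apply Rabs_le_between in Hm. simpl. nra.
Qed.

Let c := real (Lim_seq (fun k => Y k T0)).

Lemma approximant_lim k : Rabs (c - Y k T0) <= 1/2 * q^k.
Proof.
  exact (proj2 (cauchy_geometric_lim (fun k => Y k T0) (1/2) q q_range approximant_cauchy) k).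
Qed.

(* On [t <= T1] the approximants starting before [t] are [d]-small at [t], and they are
   exponentially close to [Theta_ivp T0 c] there by Gronwall. *)
Lemma approximant_limit_to_0 :
  filterlim (Theta_ivp a E lam th T0 c) (Rbar_locally m_infty) (locally 0).
Proof.
  destruct (Theta_ivp_spec a E lam th Ha HE Hth T0 c) as [HYs0 HYs].
  set (Ys := Theta_ivp a E lam th T0 c) in *.
  apply filterlim_m_infty_spec. intros eps Heps.
  set (d := Rmin (eps / 2) (1/2)).
  assert (Hd : 0 < d <= 1/2) by (unfold d; split; [apply Rmin_pos; lra | apply Rmin_r]).
  assert (Hd2 : d <= eps / 2) by (unfold d; apply Rmin_l).
  destruct (Theta_band_threshold d Hd) as [T1 HT1].
  exists (Rmin T1 T0). intros t Ht. pose proof (Rmin_l T1 T0). pose proof (Rmin_r T1 T0).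
  set (eta := eps / 2 * exp (- (1 + 4 * a) * (T0 - t))).
  assert (Heta : 0 < eta) by (unfold eta; apply Rmult_lt_0_compat; [lra | apply exp_pos]).
  pose proof q_range.
  destruct (pow_lt_1_zero q ltac:(rewrite Rabs_right; lra) (2 * eta) ltac:(lra)) as [N1 HN1].
  destruct (INR_unbounded (T0 - t)) as [N2 HN2].
  set (n := max N1 N2).
  assert (Hnt : T0 - INR n <= t) by (assert (INR N2 <= INR n) by (apply le_INR; unfold n; lia); lra).
  assert (Hclose : Rabs (c - Y n T0) < eta).
  { specialize (HN1 n ltac:(unfold n; lia)). rewrite Rabs_right in HN1 by (apply Rle_ge, pow_le; lra).
    pose proof (approximant_lim n). lra. }
  assert (Hsmall : Rabs (Y n t) < d).
  { apply (approximant_band n d t Hd ltac:(lra)); [|lra]. intros s Hs. apply HT1. lra. }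
  assert (Hdiff : Rabs (Ys t - Y n t) < eps / 2).
  { pose proof (Theta_gronwall_backward a E lam th Ha HE Hth _ _ t T0 HYs (proj2 (approximant_spec n))
                  ltac:(lra)) as Hg.
    rewrite HYs0 in Hg. apply abs_lt_of_sqr_lt; [lra|]. eapply Rle_lt_trans; [exact Hg|].
    assert (Hx : eta^2 * exp (2 * (1 + 4 * a) * (T0 - t)) = (eps / 2)^2).
    { unfold eta. rewrite Rpow_mult_distr. simpl. rewrite !Rmult_1_r, Rmult_assoc, <- !exp_plus.
      replace (- (1 + 4 * a) * (T0 - t) + - (1 + 4 * a) * (T0 - t) + 2 * (1 + 4 * a) * (T0 - t))
        with 0 by ring.
      rewrite exp_0. ring. }
    rewrite <- Hx. apply Rmult_lt_compat_r; [apply exp_pos|].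
    rewrite <- (pow2_abs (c - Y n T0)). pose proof (Rabs_pos (c - Y n T0)). simpl. nra. }
  rewrite Rminus_0_r. replace (Ys t) with ((Ys t - Y n t) + Y n t) by ring.
  eapply Rle_lt_trans; [apply Rabs_triang|]. lra.
Qed.

End Approximants.

Theorem Theta_unstable_exists :
  exists Y, Theta_solution a E lam th Y /\ filterlim Y (Rbar_locally m_infty) (locally 0).
Proof.
  destruct (Theta_band_threshold (1/2) ltac:(lra)) as [T0 HT0].
  eexists. split; [apply Theta_ivp_spec; assumption | exact (approximant_limit_to_0 T0 HT0)].
Qed.

End UnstableManifold.

(** * Comparison of the flows for E' < E *)

Section Comparison.
Variables (a E E' lam : R) (th y z : R -> R).
Hypothesis Ha : 0 < a < 1/2.
Hypothesis HE : 0 < E <= 1.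
Hypothesis HE' : 0 <= E' < E.
Hypothesis Hth : theta_solution th.
Hypothesis Hy : Theta_solution a E' lam th y.
Hypothesis Hz : Theta_solution a E lam th z.
Hypothesis Hzr : forall t, - PI < z t < 0.

Let d t := y t - z t.
Let dd t := theta_rhs a E' lam (th t) (y t) - theta_rhs a E lam (th t) (z t).
Let gap t := 2 * a * (E' - E) * (sin (th t))^2 * sin (z t).

Lemma gap_pos t : 0 < gap t.
Proof.
  unfold gap. pose proof (sin_pos_bounded _ (proj1 (Hth t))).
  assert (sin (z t) < 0).
  { destruct (Hzr t). assert (0 < sin (- z t)) by (apply sin_gt_0; lra). rewrite sin_neg in *. lra. }
  assert (0 < (E - E') * (sin (th t))^2) by (apply Rmult_lt_0_compat; [lra | simpl; nra]).
  replace (2 * a * (E' - E) * sin (th t) ^ 2 * sin (z t))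
    with (2 * a * ((E - E') * sin (th t) ^ 2) * (- sin (z t))) by ring.
  apply Rmult_lt_0_compat; nra.
Qed.

(* Lowering [E] to [E'] adds the positive term [gap] to the rhs at equal [Th]. *)
Lemma dd_mean_value_split t : exists xi, Rmin (y t) (z t) <= xi <= Rmax (y t) (z t) /\
  dd t = theta_rhs_dx a E' (th t) xi * d t + gap t.
Proof.
  destruct (theta_rhs_MVT a E' lam (th t) (y t) (z t)) as [xi [Hxi Heq]].
  exists xi. split; [exact Hxi|]. unfold dd, gap, d. rewrite <- Heq. unfold theta_rhs. ring.
Qed.

Lemma d_is_derive t : is_derive d t (dd t).
Proof. apply is_derive_Rminus; [apply Hy | apply Hz]. Qed.

Lemma dd_pos_of_d_zero t : d t = 0 -> 0 < dd t.
Proof.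
  intro Hd. destruct (dd_mean_value_split t) as [xi [_ ->]].
  rewrite Hd, Rmult_0_r, Rplus_0_l. apply gap_pos.
Qed.

Lemma d_pos_near_m_infty :
  filterlim th (Rbar_locally m_infty) (locally 0) ->
  filterlim y (Rbar_locally m_infty) (locally 0) ->
  filterlim z (Rbar_locally m_infty) (locally 0) ->
  exists T0, forall t, t <= T0 -> 0 < d t.
Proof.
  intros Hth0 Hy0 Hz0.
  pose proof (proj1 (filterlim_m_infty_spec y 0) Hy0) as Ly.
  pose proof (proj1 (filterlim_m_infty_spec z 0) Hz0) as Lz.
  destruct (theta_solution_sin_small_m_infty th Hth Hth0 (1/8) ltac:(lra)) as [T1 HT1].
  destruct (Ly (1/2) ltac:(lra)) as [T2 HT2]. destruct (Lz (1/2) ltac:(lra)) as [T3 HT3].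
  set (T0 := Rmin T1 (Rmin T2 T3) - 1).
  assert (HT0 : forall t, t <= T0 -> t < T1 /\ t < T2 /\ t < T3).
  { intros t Ht. pose proof (Rmin_l T1 (Rmin T2 T3)). pose proof (Rmin_r T1 (Rmin T2 T3)).
    pose proof (Rmin_l T2 T3). pose proof (Rmin_r T2 T3). unfold T0 in Ht. lra. }
  (* near [-oo] the slope of the rhs is [<= -1/2], so [d < 0] forces [d' > 0] *)
  assert (Hneg : forall t, t <= T0 -> d t < 0 -> 0 < dd t).
  { intros t Ht Hd. destruct (HT0 t Ht) as [H1 [H2 H3]].
    specialize (HT1 t ltac:(lra)). specialize (HT2 t H2). specialize (HT3 t H3).
    rewrite Rminus_0_r in HT2, HT3. apply Rabs_lt_between in HT2. apply Rabs_lt_between in HT3.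
    destruct (dd_mean_value_split t) as [xi [Hxi ->]].
    assert (Hxi' : Rabs xi <= 1/2) by (apply Rabs_le, (between_min_max _ _ _ _ _ Hxi); lra).
    pose proof (theta_rhs_dx_le_near_0 a E' Ha ltac:(lra) (th t) xi (proj1 (Hth t)) ltac:(lra) Hxi').
    pose proof (gap_pos t). nra. }
  assert (Hnonneg : forall t1, t1 <= T0 -> 0 <= d t1).
  { intros t1 Ht1. apply Rnot_lt_le. intro Hlt.
    (* [d] cannot come back up to [d t1] before [t1], so it stays [<= d t1 < 0] near [-oo] *)
    assert (Hall : forall t, t <= t1 -> d t <= d t1).
    { intros t Ht. apply Rnot_lt_le. intro Hgt.
      destruct (downcrossing d dd t t1 (d t1)) as [v [Hv [Hdv Hddv]]];
        [exact d_is_derive | destruct (Req_dec t t1) as [->|]; lra | exact Hgt | lra |].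
      specialize (Hneg v ltac:(lra) ltac:(lra)). lra. }
    destruct (Ly (- d t1 / 2) ltac:(lra)) as [T4 HT4].
    destruct (Lz (- d t1 / 2) ltac:(lra)) as [T5 HT5].
    set (t := Rmin t1 (Rmin T4 T5) - 1).
    pose proof (Rmin_l t1 (Rmin T4 T5)). pose proof (Rmin_r t1 (Rmin T4 T5)).
    pose proof (Rmin_l T4 T5). pose proof (Rmin_r T4 T5).
    specialize (HT4 t ltac:(unfold t; lra)). specialize (HT5 t ltac:(unfold t; lra)).
    rewrite Rminus_0_r in HT4, HT5. apply Rabs_lt_between in HT4. apply Rabs_lt_between in HT5.
    specialize (Hall t ltac:(unfold t; lra)). unfold d in *. lra. }
  exists T0. intros t Ht. destruct (Hnonneg t Ht) as [|Heq]; [assumption|].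
  destruct (is_derive_pos_strict_incr d t (dd t) 1 (d_is_derive t) (dd_pos_of_d_zero t (eq_sym Heq))
              ltac:(lra))
    as [[w [Hw Hdw]] _].
  specialize (Hnonneg w ltac:(lra)). lra.
Qed.

Lemma Theta_comparison :
  filterlim th (Rbar_locally m_infty) (locally 0) ->
  filterlim y (Rbar_locally m_infty) (locally 0) ->
  filterlim z (Rbar_locally m_infty) (locally 0) ->
  forall t, z t < y t.
Proof.
  intros Hth0 Hy0 Hz0 t. enough (0 < d t) by (unfold d in *; lra).
  destruct (d_pos_near_m_infty Hth0 Hy0 Hz0) as [T0 HT0].
  destruct (Rle_or_lt t T0) as [|Ht]; [now apply HT0|].
  apply Rnot_le_lt. intro Hle.
  destruct (downcrossing d dd T0 t 0) as [v [Hv [Hdv Hddv]]];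
    [exact d_is_derive | exact Ht | apply HT0; lra | exact Hle |].
  specialize (dd_pos_of_d_zero v Hdv). lra.
Qed.

Hypothesis Hzy : forall t, z t < y t.
Hypothesis Hyneg : forall t, y t < 0.
Hypothesis Hthpi : filterlim th (Rbar_locally p_infty) (locally PI).

Let K := 4 * a + 2 * Rabs lam.

Lemma K_sin_small al : 0 < al <= 1/4 -> exists T, forall t, T <= t -> K * sin (th t) <= sin al / 2.
Proof.
  intro Hal. assert (HK : 0 <= K) by (unfold K; pose proof (Rabs_pos lam); lra).
  assert (Hs0 : 0 < sin al) by (apply sin_gt_0; pose proof PI2_1; lra).
  destruct (theta_solution_sin_small_p_infty th Hth Hthpi (sin al / 2 / (K + 1))) as [T HT].
  { apply Rdiv_lt_0_compat; lra. }
  exists T. intros t Ht. specialize (HT t Ht). pose proof (sin_pos_bounded _ (proj1 (Hth t))).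
  left. apply (mult_lt_of_lt_div K); lra.
Qed.

Lemma Theta_stays_above c al T t2 : 0 < al <= 1/4 -> - PI + 1/4 <= c <= - al ->
  (forall t, T <= t -> K * sin (th t) <= sin al / 2) -> T <= t2 -> c < y t2 ->
  forall t, t2 <= t -> c < y t.
Proof.
  intros Hal Hc HT Ht2 Hy2 t Ht. apply Rnot_le_lt. intro Hle.
  destruct (downcrossing y (fun s => theta_rhs a E' lam (th s) (y s)) t2 t c) as [v [Hv [Hyv Hdv]]];
    [exact Hy | destruct (Req_dec t t2) as [->|]; lra | exact Hy2 | exact Hle |].
  rewrite Hyv in Hdv.
  pose proof (theta_rhs_ge_band a E' lam Ha ltac:(lra) (th v) c al (proj1 (Hth v)) Hal Hc
                (HT v ltac:(lra))).
  assert (0 < sin al) by (apply sin_gt_0; pose proof PI2_1; lra). lra.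
Qed.

Lemma Theta_rises_above al T : 0 < al <= 1/4 ->
  (forall t, T <= t -> K * sin (th t) <= sin al / 2) ->
  (forall t, T <= t -> - PI + 1/4 < y t) -> exists t2, T <= t2 /\ - al < y t2.
Proof.
  intros Hal HT Hlow. pose proof PI2_1. apply NNPP. intro Hno.
  assert (Hup : forall t, T <= t -> y t <= - al)
    by (intros t Ht; apply Rnot_lt_le; intro Hlt; apply Hno; exists t; split; assumption).
  assert (Hs : 0 < sin al) by (apply sin_gt_0; lra).
  (* below [-al] the rhs is [>= sin al / 2], so [y] would climb past [0] *)
  set (t3 := T + (PI + 1) / (sin al / 2)).
  assert (Ht3 : T <= t3)
    by (unfold t3; assert (0 < (PI + 1) / (sin al / 2)) by (apply Rdiv_lt_0_compat; lra); lra).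
  assert (Hgrow : y T + sin al / 2 * (t3 - T) <= y t3).
  { apply (derive_ge_linear_growth y (fun s => theta_rhs a E' lam (th s) (y s)));
      [exact Ht3 | intros; apply Hy|].
    intros s Hs'.
    apply (theta_rhs_ge_band a E' lam Ha ltac:(lra) (th s) (y s) al); [apply Hth | exact Hal | |].
    - split; [left; apply Hlow | apply Hup]; lra.
    - apply HT. lra. }
  assert (sin al / 2 * (t3 - T) = PI + 1) by (unfold t3; field; lra).
  pose proof (Hlow T ltac:(lra)). pose proof (Hyneg t3). lra.
Qed.

Hypothesis Hzpi : filterlim z (Rbar_locally p_infty) (locally (- PI)).

(* If [y] stayed near [-PI] with [z], the slope [>= 1/2] there would make [d = y - z]
   grow linearly, while [0 < d < 1/2]. *)
Lemma Theta_leaves_mpi T : exists t1, T <= t1 /\ - PI + 1/2 <= y t1.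
Proof.
  destruct (theta_solution_sin_small_p_infty th Hth Hthpi (1/8) ltac:(lra)) as [Ta HTa].
  destruct (proj1 (filterlim_p_infty_spec z (- PI)) Hzpi (1/2) ltac:(lra)) as [Tc HTc].
  set (T1 := Rmax T (Rmax Ta Tc) + 1).
  assert (HT1 : T <= T1 /\ Ta < T1 /\ Tc < T1)
    by (unfold T1; pose proof (Rmax_l T (Rmax Ta Tc)); pose proof (Rmax_r T (Rmax Ta Tc));
        pose proof (Rmax_l Ta Tc); pose proof (Rmax_r Ta Tc); lra).
  apply NNPP. intro Hno.
  assert (Hlow : forall t, T1 <= t -> y t < - PI + 1/2)
    by (intros t Ht; apply Rnot_le_lt; intro Hge; apply Hno; exists t; split; [lra | exact Hge]).
  assert (Hdd : forall t, T1 <= t -> d t / 2 <= dd t).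
  { intros t Ht. pose proof (Hzr t). pose proof (Hzy t). pose proof (Hlow t Ht).
    specialize (HTc t ltac:(lra)). apply Rabs_lt_between in HTc.
    destruct (dd_mean_value_split t) as [xi [Hxi ->]].
    assert (Hxb : - PI <= xi <= - PI + 1/2) by (apply (between_min_max _ _ _ _ _ Hxi); lra).
    pose proof (theta_rhs_dx_ge_near_mpi a E' Ha ltac:(lra) (th t) xi (proj1 (Hth t))
                  ltac:(left; apply HTa; lra) Hxb).
    pose proof (gap_pos t). unfold d. nra. }
  assert (HdT1 : 0 < d T1) by (unfold d; pose proof (Hzy T1); lra).
  assert (Hmono : forall t, T1 <= t -> d T1 <= d t).
  { intros t Ht. apply (derive_nonneg_le d dd T1 t Ht); [intros; apply d_is_derive|].
    intros s Hs. specialize (Hdd s ltac:(lra)). pose proof (Hzy s). unfold d in *. lra. }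
  set (t2 := T1 + 1 / d T1).
  assert (Ht2 : T1 <= t2) by (unfold t2; assert (0 < 1 / d T1) by (apply Rdiv_lt_0_compat; lra); lra).
  assert (Hgrow : d T1 + d T1 / 2 * (t2 - T1) <= d t2).
  { apply (derive_ge_linear_growth d dd); [exact Ht2 | intros; apply d_is_derive|].
    intros s Hs. specialize (Hdd s ltac:(lra)). specialize (Hmono s ltac:(lra)). lra. }
  assert (d T1 / 2 * (t2 - T1) = 1/2) by (unfold t2; field; lra).
  pose proof (Hlow t2 Ht2). pose proof (Hzr t2). unfold d in *. lra.
Qed.

Theorem Theta_unstable_to_0 : filterlim y (Rbar_locally p_infty) (locally 0).
Proof.
  pose proof PI2_1. pose proof PI_4.
  destruct (K_sin_small (1/4) ltac:(lra)) as [Tb HTb].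
  destruct (Theta_leaves_mpi Tb) as [t1 [Ht1 Hyt1]].
  assert (Habove : forall t, t1 <= t -> - PI + 1/4 < y t)
    by (apply (Theta_stays_above (- PI + 1/4) (1/4) Tb); [lra | lra | exact HTb | exact Ht1 | lra]).
  apply filterlim_p_infty_spec. intros eps Heps.
  set (eta := Rmin eps (1/4)).
  assert (Heta : 0 < eta <= 1/4) by (unfold eta; split; [apply Rmin_pos | apply Rmin_r]; lra).
  assert (Heta_eps : eta <= eps) by (unfold eta; apply Rmin_l).
  destruct (K_sin_small (eta / 2) ltac:(lra)) as [Te HTe].
  set (T2 := Rmax Te t1).
  assert (HT2 : Te <= T2 /\ t1 <= T2) by (unfold T2; split; [apply Rmax_l | apply Rmax_r]).
  destruct (Theta_rises_above (eta / 2) T2 ltac:(lra) ltac:(intros; apply HTe; lra)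
              ltac:(intros; apply Habove; lra))
    as [t2 [Ht2 Hyt2]].
  exists t2. intros t Ht.
  assert (- eta < y t)
    by (apply (Theta_stays_above (- eta) (eta / 2) Te t2); [lra | lra | exact HTe | lra | lra | lra]).
  pose proof (Hyneg t). rewrite Rminus_0_r, Rabs_left by lra. lra.
Qed.

End Comparison.

Lemma connector_along a E lam thc zc th :
  theta_solution thc -> Theta_solution a E lam thc zc -> theta_solution th ->
  filterlim zc (Rbar_locally m_infty) (locally 0) -> omega_limit thc zc PI (- PI) ->
  exists z, Theta_solution a E lam th z /\ filterlim z (Rbar_locally m_infty) (locally 0) /\
    omega_limit th z PI (- PI).
Proof.
  intros Htc Hzc Ht Hzc0 [Hthcpi Hzcpi].
  destruct (theta_solution_translate thc th Htc Ht) as [c Hc].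
  exists (fun t => zc (t + c)). split; [|split; [|split]].
  - intro t. rewrite Hc. apply is_derive_shift, Hzc.
  - now apply filterlim_m_infty_shift.
  - apply (filterlim_ext (fun t => thc (t + c))); [intro t; now rewrite Hc|].
    now apply filterlim_p_infty_shift.
  - now apply filterlim_p_infty_shift.
Qed.

Lemma unstable_omega_limit a E E' lam th Th z :
  0 < a < 1/2 -> 0 < E <= 1 -> 0 <= E' < E -> lam <= -1 + a ->
  theta_solution th -> Theta_solution a E' lam th Th -> alpha_limit th Th 0 0 ->
  Theta_solution a E lam th z -> filterlim z (Rbar_locally m_infty) (locally 0) ->
  omega_limit th z PI (- PI) -> omega_limit th Th PI 0.
Proof.
  intros Ha HE HE' Hlam Ht HTh [Hth0 HTh0] Hz Hz0 [Hthpi Hzpi].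
  assert (Hzr : forall t, - PI < z t < 0).
  { intro t. split.
    - exact (Theta_stable_above_mpi a E lam th Ha ltac:(lra) Ht Hlam z Hz Hzpi t).
    - exact (Theta_unstable_neg a E lam th Ha ltac:(lra) Ht Hlam z Hz Hz0 t). }
  assert (Hzy : forall t, z t < Th t) by (apply (Theta_comparison a E E' lam th Th z); auto).
  split; [exact Hthpi|].
  apply (Theta_unstable_to_0 a E E' lam th Th z); auto.
  exact (Theta_unstable_neg a E' lam th Ha ltac:(lra) Ht Hlam Th HTh HTh0).
Qed.

Theorem proposition5 (a E lam : R) :
  0 < a < 1 / 2 -> 0 < E <= 1 -> lam <= -1 + a ->
  saddles_connector a E lam ->
  forall E' : R, 0 <= E' < E -> corridor_K1 a E' lam 0.
Proof.
  intros Ha HE Hlam [thc [zc [Hsc [[Hthc0 Hzc0] Homega]]]] E' HE'.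
  apply strip_solutionP in Hsc as [Htc Hzc].
  split.
  - destruct (Theta_unstable_exists a E' lam thc Ha ltac:(lra) Hlam Htc Hthc0) as [Y [HY HY0]].
    exists thc, Y. split; [now apply strip_solutionP | split; assumption].
  - intros th Th Hs Halpha. apply strip_solutionP in Hs as [Ht HTh].
    destruct (connector_along a E lam thc zc th Htc Hzc Ht Hzc0 Homega) as [z [Hz [Hz0 Hzomega]]].
    pose proof (unstable_omega_limit a E E' lam th Th z Ha HE HE' Hlam Ht HTh Halpha Hz Hz0 Hzomega)
      as [Hthpi HTh_pi].
    split.
    + intros [_ Hmpi]. pose proof (p_infty_limit_unique Th _ _ Hmpi HTh_pi). pose proof PI_RGT_0.
      lra.
    + split; [exact Hthpi|]. replace (- 2 * PI * IZR 0) with 0 by (simpl; ring). exact HTh_pi.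
Qed.
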